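(* Let $B(z)=\frac{1-\sqrt{1-4z}}{2z}=\sum_{n\ge0}\frac{1}{n+1}\binom{2n}{n}z^n$ be the generating function of binary trees counted by the number of inner nodes. Then \[ B(z)=1+\frac{z}{1-2z}\,B\Big(\frac{z^2}{(1-2z)^2}\Big). \]
   Context: A binary tree is either a leaf $\square$ or a root (an inner node) together with an ordered pair (left, right) of subtrees which are binary trees. The size of a binary tree is its number of inner nodes. *)

From Stdlib Require Import Reals.
From Coquelicot Require Import Coquelicot.
Open Scope R_scope.

Definition bcoef (n : nat) : R := / INR (S n) * Binomial.C (2 * n) n.

(* The generating function B(z) = sum_{n>=0} bcoef n * z^n,
   as a real function (convergent for |z| < 1/4). *)
Definition B (z : R) : R := Series (fun n => bcoef n * z ^ n).

(* The coefficients satisfy (n+2) c_(n+1) = (4n+2) c_n, i.e. B solves the linear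
   differential equation (1 - 4z) (zB)' + 2zB = 1 on |z| < 1/4.  Hence
   (1 - 2zB(z)) / sqrt(1 - 4z) has zero derivative there, so it is constantly 1
   and B(z) = (1 - sqrt(1 - 4z)) / (2z).  The functional equation is then an
   algebraic identity, because 1 - 4 z^2/(1-2z)^2 = (1 - 4z)/(1 - 2z)^2. *)

From Stdlib Require Import Reals Lra Lia.
From Coquelicot Require Import Coquelicot.
Open Scope R_scope.

Lemma bcoef_0 : bcoef 0 = 1.
Proof. unfold bcoef, Binomial.C; simpl; field. Qed.

Lemma bcoef_rec n : INR (S (S n)) * bcoef (S n) = (4 * INR n + 2) * bcoef n.
Proof.
  unfold bcoef, Binomial.C.
  replace (2 * S n)%nat with (S (S (2 * n))) by lia.
  replace (S (S (2 * n)) - S n)%nat with (S n) by lia.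
  replace (2 * n - n)%nat with n by lia.
  rewrite !fact_simpl, !mult_INR, !S_INR, mult_INR; simpl (INR 2).
  assert (H1 := INR_fact_neq_0 n); assert (H2 := INR_fact_neq_0 (2 * n)).
  assert (Hn := pos_INR n).
  field; repeat split; lra.
Qed.

Lemma bcoef_S n : bcoef (S n) = (4 * INR n + 2) / (INR n + 2) * bcoef n.
Proof.
  assert (Hn := pos_INR n).
  apply Rmult_eq_reg_l with (INR (S (S n))); [|rewrite !S_INR; lra].
  rewrite bcoef_rec, !S_INR; field; lra.
Qed.

Lemma bcoef_pos n : 0 < bcoef n.
Proof.
  induction n as [|n IH]; [rewrite bcoef_0; lra|].
  assert (Hn := pos_INR n).
  rewrite bcoef_S; apply Rmult_lt_0_compat; [apply Rdiv_lt_0_compat|]; lra.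
Qed.

Lemma bcoef_le_pow4 n : bcoef n <= 4 ^ n.
Proof.
  induction n as [|n IH]; [rewrite bcoef_0; simpl; lra|].
  assert (Hn := pos_INR n).
  assert (Hq : (4 * INR n + 2) / (INR n + 2) <= 4).
  { apply Rmult_le_reg_r with (INR n + 2); [lra|].
    unfold Rdiv; rewrite Rmult_assoc, Rinv_l; lra. }
  rewrite bcoef_S, <- tech_pow_Rmult.
  apply Rmult_le_compat; try lra.
  - apply Rlt_le, Rdiv_lt_0_compat; lra.
  - apply Rlt_le, bcoef_pos.
Qed.

Lemma CV_radius_bcoef : Rbar_le (/ 4) (CV_radius bcoef).
Proof.
  apply (proj1 (CV_radius_bounded bcoef)).
  exists 1; intro n.
  assert (Hp := pow_le (/ 4) n); assert (Hc := bcoef_pos n).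
  rewrite Rabs_pos_eq by (apply Rmult_le_pos; lra).
  rewrite <- (pow1 n), <- (Rinv_r 4), Rpow_mult_distr by lra.
  apply Rmult_le_compat_r; [lra | apply bcoef_le_pow4].
Qed.

Lemma CV_radius_bcoef_gt x : Rabs x < / 4 -> Rbar_lt (Rabs x) (CV_radius bcoef).
Proof.
  intro Hx; generalize CV_radius_bcoef.
  destruct (CV_radius bcoef); simpl; auto; lra.
Qed.

(* [PS_derive (PS_incr_1 a)] is the coefficient sequence [(n + 1) a_n] of [(z A(z))']. *)
Lemma bcoef_ode x : Rabs x < / 4 ->
  (1 - 4 * x) * PSeries (PS_derive (PS_incr_1 bcoef)) x + 2 * x * PSeries bcoef x = 1.
Proof.
  intro Hx.
  set (e := PS_derive (PS_incr_1 bcoef)).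
  set (E := PSeries e x); set (P := PSeries bcoef x).
  assert (Hin := CV_radius_bcoef_gt x Hx).
  assert (He0 : e 0%nat = 1) by (unfold e, PS_derive; simpl; rewrite bcoef_0; ring).
  assert (Hrec : forall n, e (S n) = 4 * e n - 2 * bcoef n).
  { intro n; unfold e, PS_derive; simpl PS_incr_1.
    replace (S n + 1)%nat with (S (S n)) by lia; replace (n + 1)%nat with (S n) by lia.
    rewrite bcoef_rec, S_INR; ring. }
  assert (HP : is_series (fun n => bcoef n * x ^ n) P).
  { apply is_pseries_R, PSeries_correct, CV_radius_inside, Hin. }
  assert (HE : is_series (fun n => e n * x ^ n) E).
  { apply is_pseries_R, PSeries_correct, CV_radius_inside.
    unfold e; rewrite CV_radius_derive, CV_radius_incr_1; exact Hin. }
  assert (Hshift : is_series (fun n => e (S n) * x ^ S n) (E - 1)).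
  { apply (is_series_incr_1 (fun n => e n * x ^ n)).
    match goal with |- is_series _ ?l => replace l with E; [exact HE|] end.
    rewrite He0; unfold plus; simpl; ring. }
  assert (Hrec_series : is_series (fun n => e (S n) * x ^ S n) ((4 * E - 2 * P) * x)).
  { apply is_series_ext with (fun n => (4 * (e n * x ^ n) - 2 * (bcoef n * x ^ n)) * x).
    { intro n; rewrite Hrec; simpl; ring. }
    apply is_series_scal_r, (is_series_minus (fun n => 4 * (e n * x ^ n)));
      apply (is_series_scal_l (V := R_NormedModule)); assumption. }
  assert (Heq := eq_trans (eq_sym (is_series_unique _ _ Hshift))
                          (is_series_unique _ _ Hrec_series)).
  nra.
Qed.

Lemma B_PSeries : B = PSeries bcoef.
Proof. reflexivity. Qed.

Lemma eq_of_is_derive_0 (f : R -> R) (a b : R) :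
  (forall x, Rmin a b <= x <= Rmax a b -> is_derive f x 0) -> f b = f a.
Proof.
  intro Hd.
  destruct (MVT_gen f a b (fun _ => 0)) as [c [_ Hc]].
  - intros x Hx; apply Hd; lra.
  - intros x Hx; apply continuity_pt_filterlim, (ex_derive_continuous f).
    exists 0; apply Hd, Hx.
  - lra.
Qed.

Lemma is_derive_B_normalized y : Rabs y < / 4 ->
  is_derive (fun t => (1 - 2 * t * B t) / sqrt (1 - 4 * t)) y 0.
Proof.
  intro Hy.
  assert (Hin := CV_radius_bcoef_gt y Hy).
  assert (Hin1 : Rbar_lt (Rabs y) (CV_radius (PS_incr_1 bcoef)))
    by (rewrite CV_radius_incr_1; exact Hin).
  assert (Hy4 : 0 < 1 - 4 * y) by (apply Rabs_def2 in Hy; lra).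
  assert (Hs : 0 < sqrt (1 - 4 * y)) by (apply sqrt_lt_R0; lra).
  apply is_derive_ext with (fun t => (1 - 2 * PSeries (PS_incr_1 bcoef) t) / sqrt (1 - 4 * t)).
  { intro t; rewrite PSeries_incr_1, B_PSeries; f_equal; ring. }
  assert (Hnum : is_derive (fun t => 1 - 2 * PSeries (PS_incr_1 bcoef) t) y
                   (- 2 * PSeries (PS_derive (PS_incr_1 bcoef)) y)).
  { auto_derive; [apply ex_derive_PSeries, Hin1|].
    rewrite Derive_PSeries by exact Hin1; ring. }
  assert (Hden : is_derive (fun t => sqrt (1 - 4 * t)) y (- 2 / sqrt (1 - 4 * y))).
  { auto_derive; [lra|]. replace (1 + - (4 * y)) with (1 - 4 * y) by ring. field; lra. }
  replace 0 with ((- 2 * PSeries (PS_derive (PS_incr_1 bcoef)) y * sqrt (1 - 4 * y)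
                   - (1 - 2 * PSeries (PS_incr_1 bcoef) y) * (- 2 / sqrt (1 - 4 * y)))
                  / sqrt (1 - 4 * y) ^ 2).
  { apply (is_derive_div _ _ _ _ _ Hnum Hden); lra. }
  assert (Hode := bcoef_ode y Hy).
  assert (Hs2 : sqrt (1 - 4 * y) ^ 2 = 1 - 4 * y) by (apply pow2_sqrt; lra).
  rewrite PSeries_incr_1.
  set (s := sqrt (1 - 4 * y)) in *.
  set (E := PSeries (PS_derive (PS_incr_1 bcoef)) y) in *; set (P := PSeries bcoef y) in *.
  transitivity (2 * (1 - (s ^ 2 * E + 2 * y * P)) / s ^ 3); [field; lra|].
  rewrite Hs2, Hode; field; lra.
Qed.

Lemma B_closed_form z : Rabs z < / 4 -> 1 - 2 * z * B z = sqrt (1 - 4 * z).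
Proof.
  intro Hz.
  assert (Hz4 : 0 < 1 - 4 * z) by (apply Rabs_def2 in Hz; lra).
  assert (Hs : 0 < sqrt (1 - 4 * z)) by (apply sqrt_lt_R0; lra).
  assert (Hconst : (1 - 2 * z * B z) / sqrt (1 - 4 * z)
                   = (1 - 2 * 0 * B 0) / sqrt (1 - 4 * 0)).
  { apply (eq_of_is_derive_0 (fun t => (1 - 2 * t * B t) / sqrt (1 - 4 * t))).
    intros x Hx; apply is_derive_B_normalized.
    apply Rabs_def2 in Hz; apply Rabs_def1;
      unfold Rmin, Rmax in Hx; destruct (Rle_dec 0 z); lra. }
  replace (1 - 4 * 0) with 1 in Hconst by ring.
  rewrite sqrt_1 in Hconst.
  replace (1 - 2 * z * B z) with ((1 - 2 * z * B z) / sqrt (1 - 4 * z) * sqrt (1 - 4 * z))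
    by (field; lra).
  rewrite Hconst; field.
Qed.

Lemma B_formula z : Rabs z < / 4 -> z <> 0 -> B z = (1 - sqrt (1 - 4 * z)) / (2 * z).
Proof.
  intros Hz Hz0; rewrite <- B_closed_form by exact Hz; field; exact Hz0.
Qed.

Lemma Rabs_subst_lt z : Rabs z < / 4 -> Rabs (z ^ 2 / (1 - 2 * z) ^ 2) < / 4.
Proof.
  intro Hz; apply Rabs_def2 in Hz.
  assert (Hd : 0 < (1 - 2 * z) ^ 2) by (apply pow_lt; lra).
  rewrite Rabs_pos_eq by (apply Rcomplements.Rdiv_le_0_compat; [apply pow2_ge_0 | exact Hd]).
  apply Rmult_lt_reg_r with ((1 - 2 * z) ^ 2); [exact Hd|].
  unfold Rdiv; rewrite Rmult_assoc, Rinv_l by lra.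
  simpl; nra.
Qed.

Lemma sqrt_subst z : Rabs z < / 4 ->
  sqrt (1 - 4 * (z ^ 2 / (1 - 2 * z) ^ 2)) = sqrt (1 - 4 * z) / (1 - 2 * z).
Proof.
  intro Hz; apply Rabs_def2 in Hz.
  replace (1 - 4 * (z ^ 2 / (1 - 2 * z) ^ 2)) with ((1 - 4 * z) / (1 - 2 * z) ^ 2)
    by (field; lra).
  assert (Hd : 0 < (1 - 2 * z) ^ 2) by (apply pow_lt; lra).
  rewrite sqrt_div, sqrt_pow2 by lra; reflexivity.
Qed.

Theorem proposition1 (z : R) (hz : Rabs z < / 4) :
  B z = 1 + z / (1 - 2 * z) * B (z ^ 2 / (1 - 2 * z) ^ 2).
Proof.
  destruct (Req_dec z 0) as [->|Hz0].
  { rewrite B_PSeries, PSeries_0, bcoef_0; unfold Rdiv; ring. }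
  assert (Hz := hz); apply Rabs_def2 in Hz.
  assert (Hw0 : z ^ 2 / (1 - 2 * z) ^ 2 <> 0).
  { apply Rmult_integral_contrapositive; split;
      [apply pow_nonzero | apply Rinv_neq_0_compat, pow_nonzero; lra]; exact Hz0. }
  rewrite (B_formula z hz Hz0), (B_formula _ (Rabs_subst_lt z hz) Hw0), (sqrt_subst z hz).
  field; lra.
Qed.
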